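(* Consider the augmented network and weighted waterfilling map $\theta\mapsto g(\theta)$ defined in the context. Suppose $\theta=(\theta_{k,p})$ is a vector of strictly positive weights that is a fixed point of the adaptive waterfiller update, i.e. $$\theta_{k,p}=\frac{g_{k,p}(\theta)}{\sum_{p'\in\mathcal{P}_k}g_{k,p'}(\theta)}\quad\text{for all }k\in\mathcal{D},\ p\in\mathcal{P}_k$$ (with all denominators positive). Then the subflow allocation $g(\theta)$ is bandwidth-bottlenecked.
   Context: Demands $\mathcal{D}$, links $\mathcal{E}$ with capacities $c_e>0$, each demand $k$ with requested rate $d_k>0$ and finite path set $\mathcal{P}_k$ (paths are subsets of $\mathcal{E}$). Each pair $(k,p)$, $p\in\mathcal{P}_k$, is a subflow. Augmented network: in addition to the links in $\mathcal{E}$, each demand $k$ has a virtual link $v_k$ of capacity $d_k$; subflow $(k,p)$ traverses the links of $p$ together with $v_k$. A subflow allocation $g=(g_{k,p})\ge 0$ is feasible if $\sum_{(k,p):e\in p}g_{k,p}\le c_e$ for all $e\in\mathcal{E}$ and $\sum_{p\in\mathcal{P}_k}g_{k,p}\le d_k$ for all $k$; its demand totals are $f_k=\sum_{p\in\mathcal{P}_k}g_{k,p}$. A link is saturated if its capacity constraint holds with equality. Given strictly positive weights $\theta$, the weighted waterfilling solution $g(\theta)$ is the (standardly unique) feasible subflow allocation in which every subflow $(k,p)$ has a weighted bottleneck: a saturated link $l$ on the augmented path of $(k,p)$ such that $g_{k,p}/\theta_{k,p}\ge g_{j,p'}/\theta_{j,p'}$ for every subflow $(j,p')$ traversing $l$.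 A feasible subflow allocation $g$ with totals $f$ is bandwidth-bottlenecked if for every demand $k$ and every $p\in\mathcal{P}_k$ there is a saturated link $l$ on the augmented path of $(k,p)$ such that $f_k\ge f_j$ for every demand $j$ having a subflow with positive rate traversing $l$. *)

From HB Require Import structures.
From mathcomp Require Import all_boot all_order all_algebra.
Set Implicit Arguments. Unset Strict Implicit. Unset Printing Implicit Defensive.
Import Order.TTheory GRing.Theory Num.Theory.
Local Open Scope ring_scope.

(* Network data:
   D : finite type of demands, E : finite type of links,
   c : E -> R link capacities, d : D -> R requested rates,
   P : D -> {set {set E}} the finite path set of each demand
       (a path is a subset of E).
   A subflow is a pair (k, p) with p \in P k.
   Allocations / weights are functions g : D -> {set E} -> R, only
   their values on subflows (p \in P k) matter.
   Augmented links: inl e (physical link e with capacity c e) and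
   inr k (virtual link v_k with capacity d k). *)

Definition alink (D E : finType) := (E + D)%type.

Definition traverses (D E : finType) (k : D) (p : {set E}) (l : E + D) : bool :=
  match l with
  | inl e => e \in p
  | inr j => j == k
  end.

Definition acap (R : realFieldType) (D E : finType) (c : E -> R) (d : D -> R)
  (l : E + D) : R :=
  match l with inl e => c e | inr k => d k end.

Definition load (R : realFieldType) (D E : finType) (P : D -> {set {set E}})
  (g : D -> {set E} -> R) (l : E + D) : R :=
  \sum_(k : D) \sum_(p in P k | traverses k p l) g k p.

Definition dtotal (R : realFieldType) (D E : finType) (P : D -> {set {set E}})
  (g : D -> {set E} -> R) (k : D) : R :=
  \sum_(p in P k) g k p.

Definition feasible (R : realFieldType) (D E : finType) (c : E -> R) (d : D -> R)
  (P : D -> {set {set E}}) (g : D -> {set E} -> R) : Prop :=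
  (forall k p, p \in P k -> 0 <= g k p) /\
  (forall e : E, load P g (inl e) <= c e) /\
  (forall k : D, dtotal P g k <= d k).

Definition saturated (R : realFieldType) (D E : finType) (c : E -> R) (d : D -> R)
  (P : D -> {set {set E}}) (g : D -> {set E} -> R) (l : E + D) : Prop :=
  load P g l = acap c d l.

Definition weighted_waterfilling (R : realFieldType) (D E : finType)
  (c : E -> R) (d : D -> R) (P : D -> {set {set E}})
  (theta g : D -> {set E} -> R) : Prop :=
  feasible c d P g /\
  forall k p, p \in P k ->
    exists l : E + D,
      [/\ traverses k p l, saturated c d P g l &
          forall j p', p' \in P j -> traverses j p' l ->
            g j p' / theta j p' <= g k p / theta k p].

Definition bandwidth_bottlenecked (R : realFieldType) (D E : finType)
  (c : E -> R) (d : D -> R) (P : D -> {set {set E}})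
  (g : D -> {set E} -> R) : Prop :=
  feasible c d P g /\
  forall k p, p \in P k ->
    exists l : E + D,
      [/\ traverses k p l, saturated c d P g l &
          forall j : D,
            (exists2 p', p' \in P j & (0 < g j p') && traverses j p' l) ->
            dtotal P g j <= dtotal P g k].

Arguments load {R D E} P g l.
Arguments dtotal {R D E} P g k.
Arguments feasible {R D E} c d P g.
Arguments saturated {R D E} c d P g l.
Arguments weighted_waterfilling {R D E} c d P theta g.
Arguments bandwidth_bottlenecked {R D E} c d P g.

From HB Require Import structures.
From mathcomp Require Import all_boot all_order all_algebra.
Import Order.TTheory GRing.Theory Num.Theory.
Local Open Scope ring_scope.

(* At a fixed point of the adaptive waterfiller update every
   subflow weight is theta_{k,p} = g_{k,p} / f_k, so the weighted rate of the
   subflow is g_{k,p} / theta_{k,p} = f_k: weighted rates coincide with demand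
   totals.  A weighted bottleneck of (k,p) is then a saturated link on which
   every subflow (j,p') satisfies f_j <= f_k, which is exactly a bandwidth
   bottleneck (even without restricting to subflows of positive rate). *)

Lemma weighted_rate_of_normalized_weight (R : numFieldType) (x f t : R) :
  f != 0 -> 0 < t -> t = x / f -> x / t = f.
Proof.
move=> f_neq0 t_gt0 t_def.
have x_neq0 : x != 0.
  by apply: contraTneq t_gt0 => x0; rewrite t_def x0 mul0r ltxx.
by rewrite t_def invfM invrK mulrA mulfV // mul1r.
Qed.

Lemma waterfilling_bandwidth_bottlenecked (R : realFieldType) (D E : finType)
  (c : E -> R) (d : D -> R) (P : D -> {set {set E}})
  (theta g : D -> {set E} -> R) :
  weighted_waterfilling c d P theta g ->
  (forall k p, p \in P k -> g k p / theta k p = dtotal P g k) ->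
  bandwidth_bottlenecked c d P g.
Proof.
move=> [g_feasible g_bottleneck] rate_eq_total.
split=> // k p Pkp.
have [l [k_on_l l_saturated l_max]] := g_bottleneck k p Pkp.
exists l; split=> // j [p' Pjp' /andP [_ j_on_l]].
rewrite -(rate_eq_total j p' Pjp') -(rate_eq_total k p Pkp).
exact: l_max.
Qed.

Theorem theorem3 (R : realFieldType) (D E : finType)
  (c : E -> R) (d : D -> R) (P : D -> {set {set E}})
  (theta g : D -> {set E} -> R) :
  (forall e, 0 < c e) ->
  (forall k, 0 < d k) ->
  (forall k p, p \in P k -> 0 < theta k p) ->
  weighted_waterfilling c d P theta g ->
  (forall k p, p \in P k -> 0 < dtotal P g k) ->
  (forall k p, p \in P k -> theta k p = g k p / dtotal P g k) ->
  bandwidth_bottlenecked c d P g.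
Proof.
move=> _ _ theta_gt0 g_waterfilling total_gt0 fixed_point.
apply: waterfilling_bandwidth_bottlenecked g_waterfilling _ => k p Pkp.
apply: weighted_rate_of_normalized_weight; last exact: fixed_point.
- by rewrite gt_eqF // (total_gt0 k p).
- exact: theta_gt0.
Qed.
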